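(* Let $\kappa,\lambda,\mu$ be cardinals. Then $\binom{\kappa}{\lambda}\rightarrow\binom{\kappa}{\mu}_2$ implies $\binom{\mathrm{cf}(\kappa)}{\lambda}\rightarrow\binom{\mathrm{cf}(\kappa)}{\mu}_2$.
   Context: Notation: $\binom{\lambda}{\kappa}\rightarrow\binom{\alpha}{\beta}_\chi$ means that for every coloring $c:\lambda\times\kappa\rightarrow\chi$ there are $A\subseteq\lambda$, $B\subseteq\kappa$ with $\mathrm{otp}(A)=\alpha$, $\mathrm{otp}(B)=\beta$ and $c\upharpoonright(A\times B)$ constant. *)

(* Ordinals are represented as well-ordered types
   (types with a well-founded strict total order); cardinals as initial
   ordinals. *)
From Stdlib Require Import Classical.

Record woType := WoType {
  wcar :> Type;
  wlt : wcar -> wcar -> Prop;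
  wlt_wf : well_founded wlt;
  wlt_irrefl : forall x, ~ wlt x x;
  wlt_trans : forall x y z, wlt x y -> wlt y z -> wlt x z;
  wlt_total : forall x y, wlt x y \/ x = y \/ wlt y x
}.

Arguments wlt {w} x y.

Definition has_otp {K : woType} (A : K -> Prop) (alpha : woType) : Prop :=
  exists (f : {x : K | A x} -> alpha) (g : alpha -> {x : K | A x}),
    (forall a, g (f a) = a) /\ (forall b, f (g b) = b) /\
    (forall a b, wlt (proj1_sig a) (proj1_sig b) <-> wlt (f a) (f b)).

Definition is_cardinal (K : woType) : Prop :=
  forall (x : K) (f : K -> {y : K | wlt y x}) (g : {y : K | wlt y x} -> K),
    ~ ((forall a, g (f a) = a) /\ (forall b, f (g b) = b)).

Definition cofinal {K : woType} (A : K -> Prop) : Prop :=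
  forall x : K, exists y, A y /\ (x = y \/ wlt x y).

(* C has order type cf(K): C is the order type of some cofinal subset of K
   and is <= the order type of every cofinal subset of K. *)
Definition is_cof (K C : woType) : Prop :=
  (exists A : K -> Prop, cofinal A /\ has_otp A C) /\
  (forall A : K -> Prop, cofinal A ->
     exists f : C -> {x : K | A x},
       forall c d, wlt c d -> wlt (proj1_sig (f c)) (proj1_sig (f d))).

(* (lam kap) -> (alpha beta)_chi  with chi given as a type of colours:
   every c : lam x kap -> chi has A ⊆ lam, B ⊆ kap of order types
   alpha, beta with c constant on A x B. *)
Definition polarized (lam kap alpha beta : woType) (chi : Type) : Prop :=
  forall c : lam -> kap -> chi,
    exists (A : lam -> Prop) (B : kap -> Prop),
      has_otp A alpha /\ has_otp B beta /\
      exists col : chi, forall x y, A x -> B y -> c x y = col.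

(* Fix a strictly increasing cofinal map G : cf(kappa) -> kappa and, for each
   x < kappa, an index h x with x <= G (h x).  A colouring c of
   cf(kappa) x lambda induces the colouring (x, y) |-> c (h x, y) of
   kappa x lambda, which by hypothesis is constant on some A x B with
   otp A = kappa and otp B = mu.  A set of order type kappa is cofinal in
   kappa, hence so is G[h[A]]; by minimality of cf(kappa) it contains a
   strictly increasing cf(kappa)-sequence G (h a_z), and then
   {h a_z | z < cf(kappa)} x B is homogeneous for c. *)
From Stdlib Require Import Classical IndefiniteDescription.

Definition wle {K : woType} (x y : K) : Prop := x = y \/ wlt x y.

Definition strictly_increasing {K L : woType} (F : K -> L) : Prop :=
  forall a b, wlt a b -> wlt (F a) (F b).

Lemma wle_trans {K : woType} (x y z : K) : wle x y -> wle y z -> wle x z.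
Proof.
  intros [<- | Hxy] [<- | Hyz]; unfold wle; auto.
  right; exact (wlt_trans _ _ _ _ Hxy Hyz).
Qed.

Section StrictlyIncreasing.

Context {K L : woType} (F : K -> L) (F_incr : strictly_increasing F).

Lemma strictly_increasing_reflect a b : wlt (F a) (F b) -> wlt a b.
Proof.
  intros Hlt. destruct (wlt_total _ a b) as [H | [<- | H]]; auto.
  - now apply wlt_irrefl in Hlt.
  - exfalso. apply (wlt_irrefl _ (F a)).
    exact (wlt_trans _ _ _ _ Hlt (F_incr _ _ H)).
Qed.

Lemma strictly_increasing_inj a b : F a = F b -> a = b.
Proof.
  intros E. destruct (wlt_total _ a b) as [H | [H | H]]; auto;
    apply F_incr in H; rewrite E in H; now apply wlt_irrefl in H.
Qed.

Lemma has_otp_image : has_otp (fun y => exists x, F x = y) K.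
Proof.
  assert (preimage : forall y : {y : L | exists x, F x = y},
            {x : K | F x = proj1_sig y}).
  { intros [y Hy]. exact (constructive_indefinite_description _ Hy). }
  exists (fun y => proj1_sig (preimage y)),
         (fun x => exist _ (F x) (ex_intro _ x eq_refl)).
  split; [| split].
  - intros [y Hy]. destruct (preimage (exist _ y Hy)) as [x Hx]; simpl in *.
    subst y. f_equal. apply proof_irrelevance.
  - intros x. destruct (preimage _) as [x' Hx']; simpl in *.
    exact (strictly_increasing_inj _ _ Hx').
  - intros y1 y2. destruct (preimage y1) as [x1 <-], (preimage y2) as [x2 <-].
    simpl. split; [apply strictly_increasing_reflect | apply F_incr].
Qed.

End StrictlyIncreasing.

Lemma strictly_increasing_ge_id {K : woType} (P : K -> K) :
  strictly_increasing P -> forall z, wle z (P z).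
Proof.
  intros P_incr z. induction z as [z IH] using (well_founded_induction (wlt_wf K)).
  destruct (wlt_total _ z (P z)) as [H | [H | H]]; unfold wle; auto.
  exfalso. apply (wlt_irrefl _ (P z)).
  destruct (IH _ H) as [E | E]; pose proof (P_incr _ _ H) as HP.
  - rewrite <- E in HP. exact HP.
  - exact (wlt_trans _ _ _ _ E HP).
Qed.

Lemma has_otp_enum {K alpha : woType} (A : K -> Prop) :
  has_otp A alpha ->
  exists g : alpha -> K,
    strictly_increasing g /\ forall y, A y <-> exists b, g b = y.
Proof.
  intros [f [g [gf [fg f_ord]]]].
  exists (fun b => proj1_sig (g b)). split.
  - intros a b H. apply f_ord. now rewrite !fg.
  - intros y. split.
    + intros Ay. exists (f (exist _ y Ay)). now rewrite gf.
    + intros [b <-]. exact (proj2_sig (g b)).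
Qed.

Lemma has_otp_self_cofinal {K : woType} (A : K -> Prop) :
  has_otp A K -> cofinal A.
Proof.
  intros HA x. destruct (has_otp_enum A HA) as [g [g_incr g_range]].
  exists (g x). split.
  - apply g_range. now exists x.
  - exact (strictly_increasing_ge_id g g_incr x).
Qed.

Section Cofinality.

Context {K C : woType} (HC : is_cof K C).

Lemma is_cof_embed (S : K -> Prop) :
  cofinal S -> exists f : C -> K, strictly_increasing f /\ forall c, S (f c).
Proof.
  intros S_cof. destruct (proj2 HC S S_cof) as [f f_incr].
  exists (fun c => proj1_sig (f c)).
  split; [exact f_incr | intros c; exact (proj2_sig (f c))].
Qed.

Lemma is_cof_enum :
  exists (G : C -> K) (h : K -> C),
    strictly_increasing G /\ forall x, wle x (G (h x)).
Proof.
  destruct HC as [[A [A_cof HA]] _].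
  destruct (has_otp_enum A HA) as [G [G_incr G_range]].
  destruct (functional_choice (fun x c => wle x (G c))) as [h Hh].
  - intros x. destruct (A_cof x) as [y [Ay Hxy]].
    destruct (proj1 (G_range y) Ay) as [c <-]. now exists c.
  - now exists G, h.
Qed.

Lemma cofinal_ceiling_image (G : C -> K) (h : K -> C) (A : K -> Prop) :
  (forall x, wle x (G (h x))) -> cofinal A ->
  cofinal (fun y => exists a, A a /\ y = G (h a)).
Proof.
  intros Gh A_cof x. destruct (A_cof x) as [a [Aa Hxa]].
  exists (G (h a)). split.
  - now exists a.
  - exact (wle_trans _ _ _ Hxa (Gh a)).
Qed.

Lemma cof_subsequence (G : C -> K) (h : K -> C) (A : K -> Prop) :
  strictly_increasing G -> (forall x, wle x (G (h x))) -> cofinal A ->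
  exists s : C -> K, (forall z, A (s z)) /\ strictly_increasing (fun z => h (s z)).
Proof.
  intros G_incr Gh A_cof.
  destruct (is_cof_embed _ (cofinal_ceiling_image G h A Gh A_cof))
    as [f [f_incr f_in]].
  destruct (functional_choice (fun z a => A a /\ f z = G (h a)) f_in)
    as [s Hs].
  exists s. split.
  - intros z. apply Hs.
  - intros a b Hab. apply (strictly_increasing_reflect G G_incr).
    rewrite <- (proj2 (Hs a)), <- (proj2 (Hs b)). exact (f_incr _ _ Hab).
Qed.

End Cofinality.

Theorem proposition2p9 (kappa lambda mu cfk : woType) :
  is_cardinal kappa -> is_cardinal lambda -> is_cardinal mu ->
  is_cof kappa cfk ->
  polarized kappa lambda kappa mu bool ->
  polarized cfk lambda cfk mu bool.
Proof.
  intros _ _ _ Hcof Hpol c.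
  destruct (is_cof_enum Hcof) as [G [h [G_incr Gh]]].
  destruct (Hpol (fun x y => c (h x) y)) as [A [B [HA [HB [col Hcol]]]]].
  destruct (cof_subsequence Hcof G h A G_incr Gh (has_otp_self_cofinal A HA))
    as [s [sA hs_incr]].
  exists (fun z => exists w, h (s w) = z), B.
  split; [exact (has_otp_image _ hs_incr) |].
  split; [exact HB |].
  exists col. intros x y [w <-] By. exact (Hcol (s w) y (sA w) By).
Qed.
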